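(* Let $G$ be a finite abelian group of order $n$ with dual group $\hat G=\{\psi_1,\dots,\psi_n\}$. For $\chi\in\hat G^n$ define its entropy $H(\chi)=\frac1n\log\binom{n}{a_1,\dots,a_n}$, where $a_i$ is the number of coordinates of $\chi$ equal to $\psi_i$. Suppose $H\ge(\log n)^{-100}$. Then the number of $\chi\in\hat G^n$ with $H(\chi)\le H$ is at most \[ \exp\Big(Hn+O\Big(\frac{Hn\log\log n}{\log n}\Big)\Big), \] with an absolute implied constant.
   Context: $\binom{n}{a_1,\dots,a_n}=\frac{n!}{a_1!\cdots a_n!}$ is the multinomial coefficient. *)

From Stdlib Require Import Reals.
From mathcomp Require Import all_boot all_fingroup all_algebra all_field all_character.
Set Implicit Arguments. Unset Strict Implicit. Unset Printing Implicit Defensive.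

(* The dual group of a finite abelian group G is modelled by its irreducible
   characters (all linear for abelian G), indexed by Iirr G; #|Iirr G| = #|G|. *)
Section Entropy.
Variables (gT : finGroupType) (G : {group gT}).

Definition chiseq := {ffun 'I_#|G| -> Iirr G}.

Definition mult (chi : chiseq) (i : Iirr G) : nat := #|[set j | chi j == i]|.

Definition multinom (chi : chiseq) : nat :=
  ((#|G|)`! %/ \prod_(i : Iirr G) (mult chi i)`!)%N.

Definition entropy (chi : chiseq) : R :=
  Rmult (Rinv (INR #|G|)) (ln (INR (multinom chi))).

Definition count_entropy_le (H : R) : nat :=
  #|[set chi : chiseq | Rle_dec (entropy chi) H]|.
End Entropy.

(* Counting by a probability mixture.  Weight a natural number a by
   p(a) = 1 - 1/t if a = 0 and p(a) = t^-2 (1 - 1/t)^(a-1) otherwise; these weights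
   sum to at most 1.  Drawing a profile b of n with probability prod_i p(b_i), and then
   the n letters of a word independently with frequencies b/n, defines a
   sub-probability P on words of length n.  Keeping only the term of its own profile,
   a word w with letter counts a satisfies
     P(w) >= prod_i p(a_i) (a_i/n)^(a_i) >= exp (- (log M(w) + 5n/t + 3 s log t)),
   by n^n <= n! e^n and a! e^a <= e a a^a <= t e^(a/t) a^a, where M(w) is the
   multinomial coefficient of w and s its number of distinct letters.  Hence at most
   exp (X + 5n/t + 3 s log t) words satisfy M(w) <= e^X.  Since s! <= M(w), we get
   s log n <= 4X when X >= n/(log n)^100, and t = (log n)^101 makes the error
   O(X log log n / log n).  The dual of an abelian group of order n has n elements,
   so tuples of characters are words of length n over an n-letter alphabet. *)

From Stdlib Require Import Reals Lra.
From mathcomp Require Import all_boot all_fingroup all_algebra all_field all_character.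
From mathcomp Require Import Rstruct zify.
Import GRing.Theory Num.Theory.
Set Implicit Arguments. Unset Strict Implicit. Unset Printing Implicit Defensive.

Lemma prod_fact_dvdn_fact_sum (I : Type) (r : seq I) (F : I -> nat) :
  \prod_(i <- r) (F i)`! %| (\sum_(i <- r) F i)`!.
Proof.
elim: r => [|i r IH]; first by rewrite !big_nil.
rewrite !big_cons -(bin_fact (leq_addr (\sum_(j <- r) F j) (F i))) addKn.
by apply: dvdn_mull; rewrite dvdn_pmul2l ?fact_gt0.
Qed.

Lemma fact_mul_factS_le a b : 0 < a -> a`! * b.+1`! <= (a + b)`!.
Proof.
move=> a_gt0; elim: b => [|b IH]; first by rewrite addn0 muln1.
rewrite (factS b.+1) mulnCA addnS factS.
apply: (@leq_trans (b.+2 * (a + b)`!)); first by rewrite leq_mul2l IH orbT.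
by rewrite leq_mul2r; apply/orP; right; lia.
Qed.

Lemma fact_card_support_mul_prod_fact_le (I : Type) (r : seq I) (F : I -> nat) :
  (\sum_(i <- r) (0 < F i))`! * \prod_(i <- r) (F i)`! <= (\sum_(i <- r) F i)`!.
Proof.
elim: r => [|i r IH]; first by rewrite !big_nil.
rewrite !big_cons.
set s := \sum_(j <- r) (0 < F j); set S := \sum_(j <- r) F j in IH *.
have s_le_S : s <= S by apply: leq_sum => j _; case: (F j).
case: (posnP (F i)) => [-> | Fi_gt0]; first by rewrite fact0 mul1n.
rewrite add1n mulnCA; apply: leq_trans (fact_mul_factS_le S Fi_gt0).
rewrite leq_mul2l factS -mulnA; apply/orP; right.
by apply: leq_mul; rewrite ?ltnS.
Qed.

Lemma card_mul_le_sum (I : finType) (K : numDomainType) (A : {pred I})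
    (f : I -> K) (d : K) :
  (forall i, 0 <= f i)%R -> {in A, forall i, d <= f i}%R ->
  (#|A|%:R * d <= \sum_i f i)%R.
Proof.
move=> f_ge0 A_f; rewrite (bigID (mem A)) /= mulr_natl -sumr_const.
by apply: ler_wpDr; [exact: sumr_ge0 | exact: ler_sum].
Qed.

Section Words.
Variables (T : finType) (n : nat).
Local Notation word := {ffun 'I_n -> T}.
Local Notation profile := {ffun T -> 'I_n.+1}.

Definition letter_count (w : word) (i : T) : nat := #|[set j | w j == i]|.

Lemma sum_letter_count w : \sum_i letter_count w i = n.
Proof.
rewrite -[RHS]card_ord -sum1_card (partition_big w predT) //=.
by apply: eq_bigr => i _; rewrite sum1_card /letter_count; apply: eq_card => j; rewrite inE.
Qed.

Lemma letter_count_le w i : letter_count w i <= n.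
Proof. by rewrite -[n]card_ord max_card. Qed.

Lemma prod_over_letters (V : comPzSemiRingType) (w : word) (F : T -> V) :
  (\prod_j F (w j) = \prod_i F i ^+ letter_count w i)%R.
Proof.
rewrite (partition_big w predT) //=; apply: eq_bigr => i _.
rewrite (eq_bigr (fun _ => F i)) => [|j /eqP -> //].
by rewrite prodr_const; congr (_ ^+ _)%R; apply: eq_card => j; rewrite !inE.
Qed.

Definition word_profile (w : word) : profile := [ffun i => inord (letter_count w i)].

Lemma word_profileE w i : word_profile w i = letter_count w i :> nat.
Proof. by rewrite ffunE inordK // ltnS letter_count_le. Qed.

Definition word_multinomial (w : word) : nat :=
  n`! %/ \prod_i (letter_count w i)`!.

Lemma word_multinomialK w :
  word_multinomial w * \prod_i (letter_count w i)`! = n`!.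
Proof.
by rewrite divnK // -{1}(sum_letter_count w) prod_fact_dvdn_fact_sum.
Qed.

Lemma fact_card_support_le_multinomial w :
  (\sum_i (0 < letter_count w i))`! <= word_multinomial w.
Proof.
rewrite -(@leq_pmul2r (\prod_i (letter_count w i)`!)); last first.
  by rewrite prodn_gt0 // => i; rewrite fact_gt0.
rewrite word_multinomialK -{1}(sum_letter_count w).
exact: fact_card_support_mul_prod_fact_le.
Qed.

End Words.

Local Open Scope ring_scope.
Local Open Scope R_scope.

Lemma exp_le_exp x y : x <= y -> exp x <= exp y.
Proof.
by case/Rle_lt_or_eq_dec => [/exp_increasing/Rlt_le | ->]; last exact: Rle_refl.
Qed.

Lemma ln_le_ln x y : 0 < x -> x <= y -> ln x <= ln y.
Proof.
by move=> x_gt0 /Rle_lt_or_eq_dec [/(ln_increasing _ _ x_gt0)/Rlt_le | ->];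
  last exact: Rle_refl.
Qed.

Lemma exp_pow x m : exp x ^ m = exp (INR m * x).
Proof.
elim: m => [|m IH]; first by rewrite Rmult_0_l exp_0.
by rewrite -tech_pow_Rmult IH -exp_plus S_INR; congr exp; ring.
Qed.

Lemma pow_add_le_exp x y m : 0 < x -> 0 <= x + y ->
  (x + y) ^ m <= x ^ m * exp (INR m * y / x).
Proof.
move=> x_gt0 xy_ge0.
have -> : INR m * y / x = INR m * (y / x) by rewrite /Rdiv Rmult_assoc.
rewrite -exp_pow -Rpow_mult_distr; apply: pow_incr; split=> //.
have := exp_ineq1_le (y / x).
have -> : x + y = x * (1 + y / x) by field; lra.
by move=> h; apply: Rmult_le_compat_l; lra.
Qed.

Lemma pow_le_fact_exp m : INR m ^ m <= INR m`! * exp (INR m).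
Proof.
elim: m => [|m IH]; first by rewrite /= exp_0; lra.
have e_gt0 := exp_pos 1.
have succ_pow : INR m.+1 ^ m <= INR m ^ m * exp 1.
  case: m IH => [|m] _.
    by rewrite /=; have := exp_ineq1_le 1; lra.
  have x_gt0 : 0 < INR m.+1 by apply: lt_0_INR; lia.
  have := @pow_add_le_exp (INR m.+1) 1 m.+1 x_gt0 ltac:(lra).
  by rewrite -S_INR /Rdiv Rmult_1_r Rinv_r //; lra.
rewrite factS mult_INR -tech_pow_Rmult [X in exp X]S_INR exp_plus.
apply: (Rle_trans _ (INR m.+1 * (INR m ^ m * exp 1))).
  by apply: Rmult_le_compat_l; [exact: pos_INR | exact: succ_pow].
have := Rmult_le_compat_r (exp 1) _ _ (Rlt_le _ _ e_gt0) IH.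
have := pos_INR m.+1; nra.
Qed.

Lemma fact_exp_le m : (0 < m)%N ->
  INR m`! * exp (INR m) <= exp 1 * INR m * INR m ^ m.
Proof.
case: m => // m _; elim: m => [|m IH]; first by rewrite /=; lra.
set x := INR m.+1 in IH.
have x_gt0 : 0 < x by apply: lt_0_INR; lia.
have e_gt0 := exp_pos 1.
have pred_pow : exp 1 * x ^ m.+2 <= (x + 1) ^ m.+2.
  have := @pow_add_le_exp (x + 1) (-1) m.+2 ltac:(lra) ltac:(lra).
  have -> : x + 1 + -1 = x by ring.
  rewrite -/x -(S_INR m.+1) -/x.
  have -> : INR m.+2 * -1 / (x + 1) = -1.
    by rewrite (S_INR m.+1) -/x; field; lra.
  rewrite exp_Ropp => /(Rmult_le_compat_l _ _ _ (Rlt_le _ _ e_gt0)).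
  by have -> : exp 1 * ((x + 1) ^ m.+2 * / exp 1) = (x + 1) ^ m.+2 by field; lra.
rewrite factS mult_INR (S_INR m.+1) -/x exp_plus.
have -> : (x + 1) * INR m.+1`! * (exp x * exp 1)
        = (x + 1) * exp 1 * (INR m.+1`! * exp x) by ring.
apply: (Rle_trans _ ((x + 1) * exp 1 * (exp 1 * x * x ^ m.+1))).
  by apply: Rmult_le_compat_l => //; nra.
have -> : exp 1 * x * x ^ m.+1 = exp 1 * x ^ m.+2 by rewrite /=; ring.
have -> : exp 1 * (x + 1) * (x + 1) ^ m.+2 = (x + 1) * exp 1 * (x + 1) ^ m.+2 by ring.
by apply: Rmult_le_compat_l => //; nra.
Qed.

Lemma exp1_mul_le t a : 0 < t -> exp 1 * a <= t * exp (a / t).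
Proof.
move=> t_gt0; have := exp_ineq1_le (a / t - 1).
have -> : exp (a / t) = exp (a / t - 1) * exp 1 by rewrite -exp_plus; congr exp; ring.
have -> : 1 + (a / t - 1) = a / t by ring.
move/(Rmult_le_compat_l _ _ _ (Rlt_le _ _ t_gt0)).
have -> : t * (a / t) = a by field; lra.
by have := exp_pos 1; nra.
Qed.

Lemma exp_neg2_le u : 0 <= u <= / 2 -> exp (- (2 * u)) <= 1 - u.
Proof.
move=> u_bd; have := exp_ineq1_le (2 * u).
have := exp_pos (- (2 * u)).
have : exp (- (2 * u)) * exp (2 * u) = 1 by rewrite -exp_plus Rplus_opp_l exp_0.
nra.
Qed.

Lemma pow_le_exp L : 163216 <= L -> L ^ 202 <= exp L.
Proof.
(* (L/404)^404 <= e^L, and (L/404)^2 >= L as soon as L >= 404^2 = 163216. *)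
move=> L_ge.
have -> : exp L = exp (L / 404) ^ 404.
  by rewrite exp_pow; congr exp; rewrite (INR_IZR_INZ 404) /=; field.
apply: (Rle_trans _ ((L / 404) ^ 404)); last first.
  by apply: pow_incr; have := exp_ineq1_le (L / 404); lra.
rewrite (pow_mult _ 2 202) (_ : (L / 404) ^ 2 = L * (L / 163216)); last first.
  by rewrite /=; field.
rewrite Rpow_mult_distr -{1}(Rmult_1_r (L ^ 202)).
apply: Rmult_le_compat_l; first by apply: pow_le; lra.
by apply: pow_R1_Rle; apply: (Rmult_le_reg_r 163216); [lra | field_simplify; lra].
Qed.

Lemma fact_exp_le_scaled t m : 0 < t -> (0 < m)%N ->
  INR m`! * exp (INR m - INR m / t) <= t * INR m ^ m.
Proof.
move=> t_gt0 m_gt0; rewrite /Rminus exp_plus -Rmult_assoc.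
have e_gt0 := exp_pos (- (INR m / t)); have pow_ge0 := pow_le (INR m) m (pos_INR m).
apply: (Rle_trans _ (exp 1 * INR m * INR m ^ m * exp (- (INR m / t)))).
  exact: Rmult_le_compat_r (Rlt_le _ _ e_gt0) (fact_exp_le m_gt0).
apply: (Rle_trans _ (t * exp (INR m / t) * INR m ^ m * exp (- (INR m / t)))).
  apply: Rmult_le_compat_r; first lra.
  by apply: Rmult_le_compat_r => //; exact: exp1_mul_le.
have -> : t * exp (INR m / t) * INR m ^ m * exp (- (INR m / t))
  = t * INR m ^ m * (exp (INR m / t) * exp (- (INR m / t))) by ring.
by rewrite -exp_plus Rplus_opp_r exp_0 Rmult_1_r; exact: Rle_refl.
Qed.

Definition geom_weight (t : R) (a : nat) : R :=
  if a is a'.+1 then (/ t) ^ 2 * (1 - / t) ^ a' else 1 - / t.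

Lemma geom_weight_ge0 t a : 1 <= t -> 0 <= geom_weight t a.
Proof.
move=> t_ge1; have u_gt0 : 0 < / t by apply: Rinv_0_lt_compat; lra.
have u_le1 : / t <= 1 by rewrite -Rinv_1; apply: Rinv_le_contravar; lra.
by case: a => [|a]; rewrite /geom_weight; [lra | apply: Rmult_le_pos; apply: pow_le; lra].
Qed.

Lemma sum_geom_weight t m : t <> 0 ->
  \sum_(a < m.+1) geom_weight t a = 1 - / t * (1 - / t) ^ m.
Proof.
move=> t_neq0; elim: m => [|m IH]; rewrite big_ord_recr /=.
  by rewrite big_ord0 -RplusE -R0E; field.
by rewrite IH -RplusE; field.
Qed.

Lemma geom_weight_freq_ge t N a : 2 <= t -> 0 < N ->
  (1 - / t) * ((/ t) ^ 3) ^ (0 < a)%N * ((1 - / t) * exp (1 - / t) / N) ^ a * INR a`!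
  <= geom_weight t a * (INR a / N) ^ a.
Proof.
move=> t_ge2 N_gt0; set u := / t; set q := 1 - u.
have u_gt0 : 0 < u by apply: Rinv_0_lt_compat; lra.
have ut : u * t = 1 by rewrite /u; field; lra.
have u_le : u <= / 2 by apply: Rinv_le_contravar; lra.
have q_bd : / 2 <= q <= 1 by rewrite /q; lra.
case: a => [|k]; first by rewrite /= /geom_weight -/u -/q; lra.
set x := INR k.+1.
have x_gt0 : 0 < x by apply: lt_0_INR; lia.
have stirling := fact_exp_le_scaled (ltac:(lra) : 0 < t) (ltn0Sn k).
rewrite -/x in stirling.
have N'_gt0 : 0 < / N by apply: Rinv_0_lt_compat.
have -> : q * ((u ^ 3) ^ (0 < k.+1)%N) * ((q * exp (1 - u)) / N) ^ k.+1 * INR k.+1`!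
    = (q * q * u ^ 3 * q ^ k * (/ N) ^ k.+1) * (INR k.+1`! * exp (x - x / t)).
  rewrite /Rdiv !Rpow_mult_distr exp_pow -/x -tech_pow_Rmult.
  have -> : x * (1 - u) = x - x * / t by rewrite /u; ring.
  by rewrite /= Rmult_1_r; ring.
have w_ge0 : 0 <= q * q * u ^ 3 * q ^ k * (/ N) ^ k.+1.
  by repeat (apply: Rmult_le_pos || apply: pow_le); lra.
apply: (Rle_trans _ _ _ (Rmult_le_compat_l _ _ _ w_ge0 stirling)).
rewrite /geom_weight -/u -/q /Rdiv Rpow_mult_distr.
have -> : q * q * u ^ 3 * q ^ k * (/ N) ^ k.+1 * (t * x ^ k.+1)
  = q * q * (u ^ 2 * q ^ k * (x ^ k.+1 * (/ N) ^ k.+1)) * (u * t) by ring.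
rewrite ut Rmult_1_r.
have : 0 <= u ^ 2 * q ^ k * (x ^ k.+1 * (/ N) ^ k.+1).
  by repeat (apply: Rmult_le_pos || apply: pow_le); lra.
have : q * q <= 1 by nra.
nra.
Qed.

Section Mixture.
Variables (T : finType) (n : nat).
Local Notation word := {ffun 'I_n -> T}.
Local Notation profile := {ffun T -> 'I_n.+1}.

Definition profile_weight t (b : profile) : R := \prod_i geom_weight t (b i).

Definition likelihood (b : profile) (w : word) : R := \prod_j (INR (b (w j)) / INR n).

Definition mixture t (w : word) : R :=
  \sum_(b : profile | (\sum_i (b i : nat))%N == n) profile_weight t b * likelihood b w.

Lemma sum_profile_weight_le1 t : 1 <= t -> \sum_(b : profile) profile_weight t b <= 1.
Proof.
move=> t_ge1; rewrite -(bigA_distr_bigA (fun i (a : 'I_n.+1) => geom_weight t a)) /=.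
apply/RleP; apply: prodr_ile1 => i _; apply/andP; split; apply/RleP.
  by apply/RleP; apply: sumr_ge0 => a _; apply/RleP; exact: geom_weight_ge0.
rewrite sum_geom_weight; last lra.
have u_ge0 : 0 <= / t by apply: Rlt_le; apply: Rinv_0_lt_compat; lra.
have u_le1 : / t <= 1 by rewrite -Rinv_1; apply: Rinv_le_contravar; lra.
rewrite -R1E; have := pow_le (1 - / t) n ltac:(lra); nra.
Qed.

Lemma sum_likelihood (b : profile) : (0 < n)%N -> (\sum_i (b i : nat))%N = n ->
  \sum_(w : word) likelihood b w = 1.
Proof.
move=> n_gt0 sum_b.
rewrite -(bigA_distr_bigA (fun (j : 'I_n) i => INR (b i) / INR n)) /=.
rewrite prodr_const card_ord -mulr_suml.
have -> : \sum_i INR (b i) = INR n.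
  rewrite -[in RHS]sum_b INRE natr_sum; apply: eq_bigr => i _; exact: INRE.
by rewrite -RmultE Rinv_r ?expr1n //; apply: not_0_INR; lia.
Qed.

Lemma mixture_term_ge0 t b w : (0 < n)%N -> 1 <= t ->
  0 <= profile_weight t b * likelihood b w.
Proof.
move=> n_gt0 t_ge1; apply/RleP; apply: mulr_ge0.
  by apply: prodr_ge0 => i _; apply/RleP; exact: geom_weight_ge0.
apply: prodr_ge0 => j _; apply/RleP; apply: Rmult_le_pos; first exact: pos_INR.
by apply: Rlt_le; apply: Rinv_0_lt_compat; apply: lt_0_INR; lia.
Qed.

Lemma mixture_ge0 t w : (0 < n)%N -> 1 <= t -> 0 <= mixture t w.
Proof.
by move=> n_gt0 t_ge1; apply/RleP; apply: sumr_ge0 => b _; apply/RleP; exact: mixture_term_ge0.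
Qed.

Lemma sum_mixture_le1 t : (0 < n)%N -> 1 <= t -> \sum_(w : word) mixture t w <= 1.
Proof.
move=> n_gt0 t_ge1; rewrite exchange_big /=.
rewrite (eq_bigr (profile_weight t)) => [|b /eqP sum_b]; last first.
  by rewrite -mulr_sumr sum_likelihood // mulr1.
apply: Rle_trans (sum_profile_weight_le1 t_ge1).
rewrite [X in _ <= X](bigID (fun b : profile => (\sum_i (b i : nat))%N == n)) /=.
apply/RleP; rewrite lerDl; apply: sumr_ge0 => b _; apply/RleP.
by apply/RleP; apply: prodr_ge0 => i _; apply/RleP; exact: geom_weight_ge0.
Qed.

Lemma word_profile_term_le_mixture t (w : word) : (0 < n)%N -> 1 <= t ->
  \prod_i (geom_weight t (letter_count w i)
           * (INR (letter_count w i) / INR n) ^+ letter_count w i)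
  <= mixture t w.
Proof.
move=> n_gt0 t_ge1; rewrite /mixture (bigD1 (word_profile w)) /=; last first.
  by rewrite (eq_bigr _ (fun i _ => word_profileE w i)) sum_letter_count.
have -> : (profile_weight t (word_profile w) * likelihood (word_profile w) w)%R
  = \prod_i (geom_weight t (letter_count w i)
            * (INR (letter_count w i) / INR n) ^+ letter_count w i).
  rewrite /likelihood (prod_over_letters w (fun i => INR (word_profile w i) / INR n)).
  by rewrite -big_split; apply: eq_bigr => i _; rewrite word_profileE.
apply/RleP; rewrite lerDl; apply: sumr_ge0 => b _; apply/RleP.
exact: mixture_term_ge0.
Qed.

End Mixture.

Lemma exp_le_letter_bound_product t X (n s D : nat) : 2 <= t -> (0 < n)%N ->
  INR n`! <= exp X * INR D ->
  exp (- (X + 5 * INR n / t + 3 * INR s * ln t))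
  <= (1 - / t) ^ n * ((/ t) ^ 3) ^ s * ((1 - / t) * exp (1 - / t) / INR n) ^ n * INR D.
Proof.
move=> t_ge2 n_gt0 fact_le.
set N := INR n; set q := 1 - / t.
have N_gt0 : 0 < N by apply: lt_0_INR; lia.
have u_gt0 : 0 < / t by apply: Rinv_0_lt_compat; lra.
have u_le : / t <= / 2 by apply: Rinv_le_contravar; lra.
have q_pow : exp (- (4 * N / t)) <= q ^ n * q ^ n.
  have q_ge : exp (- (2 * / t)) <= q by apply: exp_neg2_le; lra.
  have := pow_incr _ _ n (conj (Rlt_le _ _ (exp_pos _)) q_ge).
  rewrite exp_pow -/N => h.
  have -> : - (4 * N / t) = N * - (2 * / t) + N * - (2 * / t) by field; lra.
  by rewrite exp_plus; apply: Rmult_le_compat => //; apply: Rlt_le; exact: exp_pos.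
have u_pow : ((/ t) ^ 3) ^ s = exp (- (3 * INR s * ln t)).
  rewrite -pow_mult (_ : / t = exp (- ln t)); last by rewrite exp_Ropp exp_ln; lra.
  by rewrite exp_pow mult_INR; congr exp; rewrite /=; ring.
have stirling : exp (- X) <= exp N * INR D / N ^ n.
  have N_pow : 0 < N ^ n by apply: pow_lt.
  have := pow_le_fact_exp n; rewrite -/N => h.
  rewrite exp_Ropp; apply: (Rmult_le_reg_r (N ^ n * exp X)); first by have := exp_pos X; nra.
  have -> : / exp X * (N ^ n * exp X) = N ^ n by field; have := exp_pos X; lra.
  have -> : exp N * INR D / N ^ n * (N ^ n * exp X) = exp N * (exp X * INR D) by field; lra.
  apply: (Rle_trans _ _ _ h); rewrite (Rmult_comm (exp N)).
  by apply: Rmult_le_compat_r => //; apply: Rlt_le; exact: exp_pos.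
have -> : q ^ n * ((/ t) ^ 3) ^ s * (q * exp (1 - / t) / N) ^ n * INR D
    = q ^ n * q ^ n * ((/ t) ^ 3) ^ s * exp (- (N / t)) * (exp N * INR D / N ^ n).
  rewrite /Rdiv !Rpow_mult_distr exp_pow -/N.
  have -> : N * (1 - / t) = N + - (N * / t) by ring.
  by rewrite exp_plus -pow_inv; field; lra.
have -> : - (X + 5 * N / t + 3 * INR s * ln t)
    = - (4 * N / t) + - (3 * INR s * ln t) + - (N / t) + - X by field; lra.
rewrite !exp_plus -u_pow.
have := exp_pos (- (4 * N / t)); have := exp_pos (- (N / t)); have := exp_pos (- X).
have := pow_lt _ s (pow_lt _ 3 u_gt0).
move=> ? ? ? ?; by repeat apply: Rmult_le_compat; repeat apply: Rmult_le_pos; lra.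
Qed.

Section LowerBound.
Variables (T : finType) (n : nat).
Local Notation word := {ffun 'I_n -> T}.

Lemma word_profile_term_ge t (w : word) : 2 <= t -> (0 < n)%N ->
  (1 - / t) ^ #|T| * ((/ t) ^ 3) ^ (\sum_i (0 < letter_count w i))%N
    * ((1 - / t) * exp (1 - / t) / INR n) ^ n * INR (\prod_i (letter_count w i)`!)
  <= \prod_i (geom_weight t (letter_count w i)
              * (INR (letter_count w i) / INR n) ^+ letter_count w i).
Proof.
move=> t_ge2 n_gt0.
have N_gt0 : 0 < INR n by apply: lt_0_INR; lia.
have u_gt0 : 0 < / t by apply: Rinv_0_lt_compat; lra.
have u_le : / t <= / 2 by apply: Rinv_le_contravar; lra.
have lower_ge0 a :
    0 <= (1 - / t) * ((/ t) ^ 3) ^ (0 < a)%N * ((1 - / t) * exp (1 - / t) / INR n) ^ a * INR a`!.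
  have := exp_pos (1 - / t); have := pos_INR a`!; have := Rinv_0_lt_compat _ N_gt0.
  by move=> *; repeat (apply: Rmult_le_pos || apply: pow_le); lra.
rewrite !RpowE (INRE (\prod_i _)) natr_prod -{3}(sum_letter_count w) -!prodrXr -prodr_const.
rewrite -!big_split /=; apply/RleP; apply: ler_prod => i _; apply/andP; split.
  by have := lower_ge0 (letter_count w i); rewrite !RpowE (INRE (_`!)) => /RleP.
have := geom_weight_freq_ge (letter_count w i) t_ge2 N_gt0.
by rewrite !RpowE (INRE (_`!)) => /RleP.
Qed.

End LowerBound.

Lemma mul_ln_le_of_fact_le_exp (n s : nat) X : (0 < n)%N -> 163216 <= ln (INR n) ->
  INR n / ln (INR n) ^ 100 <= X -> INR s`! <= exp X -> INR s * ln (INR n) <= 4 * X.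
Proof.
set N := INR n; set L := ln N => n_gt0 L_ge X_ge fact_le.
have N_gt0 : 0 < N by apply: lt_0_INR; lia.
have L100_gt0 : 0 < L ^ 100 by apply: pow_lt; lra.
set Y := N / L ^ 100 in X_ge.
have N_eq : N = Y * L ^ 100 by rewrite /Y; field; lra.
have Y_ge : L ^ 100 * (L * L) <= Y.
  have : L ^ 202 <= N by rewrite -[N]exp_ln //; exact: pow_le_exp.
  have -> : L ^ 202 = L ^ 100 * (L * L) * L ^ 100 by ring.
  by rewrite N_eq => /(Rmult_le_reg_r _ _ _ L100_gt0).
have s_ge0 := pos_INR s.
case: (Rle_lt_dec (INR s * INR s) N) => [s2_le | s2_gt].
  have : INR s * INR s * (L * L) <= Y * Y.
    apply: (Rle_trans _ (N * (L * L))); first by apply: Rmult_le_compat_r; nra.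
    by rewrite N_eq; have := Rmult_le_compat_l _ _ _ (ltac:(nra) : 0 <= Y) Y_ge; nra.
  have L_ge0 : 0 <= L by lra.
  nra.
have s_gt0 : 0 < INR s by nra.
have L_lt : L < 2 * ln (INR s).
  by have := ln_increasing _ _ N_gt0 s2_gt; rewrite ln_mult // -/L; lra.
have s_ln_le : INR s * ln (INR s) <= X + INR s.
  rewrite -ln_pow // -[X + INR s]ln_exp; apply: ln_le_ln; first exact: pow_lt.
  rewrite exp_plus; apply: Rle_trans (pow_le_fact_exp s) _.
  by apply: Rmult_le_compat_r; [apply: Rlt_le; exact: exp_pos | exact: fact_le].
nra.
Qed.

Lemma error_term_le N X S : 163216 <= ln N -> N / ln N ^ 100 <= X -> 0 <= S ->
  S * ln N <= 4 * X ->
  5 * N / ln N ^ 101 + 3 * S * ln (ln N ^ 101) <= 1217 * (X * ln (ln N) / ln N).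
Proof.
set L := ln N => L_ge X_ge S_ge0 S_le.
have L_gt0 : 0 < L by lra.
have lnL_ge1 : 1 <= ln L.
  rewrite -[1]ln_exp; apply: ln_le_ln; first exact: exp_pos.
  by have := exp_le_3; lra.
have -> : ln (L ^ 101) = 101 * ln L by rewrite ln_pow // (INR_IZR_INZ 101).
set Y := X / L.
have X_eq : X = Y * L by rewrite /Y; field; lra.
have N_le : N / L ^ 101 <= Y.
  have -> : N / L ^ 101 = N / L ^ 100 / L by rewrite /=; field; lra.
  by apply: Rmult_le_compat_r => //; apply: Rlt_le; apply: Rinv_0_lt_compat.
have S_le' : S <= 4 * Y.
  by apply: (Rmult_le_reg_r L) => //; rewrite X_eq in S_le; lra.
have -> : X * ln L / L = Y * ln L by rewrite X_eq; field; lra.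
have -> : 5 * N / L ^ 101 = 5 * (N / L ^ 101) by rewrite /Rdiv; ring.
nra.
Qed.

Theorem card_words_multinomial_le (T : finType) (n : nat) X :
  #|T| = n -> (0 < n)%N -> 163216 <= ln (INR n) -> INR n / ln (INR n) ^ 100 <= X ->
  INR #|[set w : {ffun 'I_n -> T} | Rle_dec (INR (word_multinomial w)) (exp X)]|
  <= exp (X + 1217 * (X * ln (ln (INR n)) / ln (INR n))).
Proof.
move=> card_T n_gt0 L_ge X_ge.
set L := ln (INR n) in L_ge X_ge *; set t := L ^ 101.
set E := X + 1217 * _.
set A := [set w : {ffun 'I_n -> T} | Rle_dec (INR (word_multinomial w)) (exp X)].
have t_ge2 : 2 <= t.
  by apply: Rle_trans (Rle_pow L 1 101 ltac:(lra) ltac:(lia)); rewrite pow_1; lra.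
have mixture_ge w : w \in A -> exp (- E) <= mixture t w.
  rewrite /A inE; case: Rle_dec => // multinomial_le _.
  set s := (\sum_i (0 < letter_count w i))%N.
  have fact_le : INR n`! <= exp X * INR (\prod_i (letter_count w i)`!).
    rewrite -(word_multinomialK w) mult_INR; apply: Rmult_le_compat_r => //.
    exact: pos_INR.
  have s_le : INR s * L <= 4 * X.
    apply: mul_ln_le_of_fact_le_exp n_gt0 L_ge X_ge _; apply: Rle_trans multinomial_le.
    by apply: le_INR; apply/leP; exact: fact_card_support_le_multinomial.
  apply: (Rle_trans _ _ _ _ (word_profile_term_le_mixture (t := t) w n_gt0 ltac:(lra))).
  apply: (Rle_trans _ _ _ _ (word_profile_term_ge w t_ge2 n_gt0)); rewrite card_T.
  apply: (Rle_trans _ _ _ _ (exp_le_letter_bound_product s t_ge2 n_gt0 fact_le)).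
  apply: exp_le_exp; have := error_term_le L_ge X_ge (pos_INR s) s_le.
  by rewrite -/L -/t /E; lra.
have := card_mul_le_sum
  (fun w => introT RleP (mixture_ge0 (t := t) w n_gt0 ltac:(lra)))
  (fun w Aw => introT RleP (mixture_ge w Aw)).
move=> /RleP /Rle_trans /(_ (sum_mixture_le1 T (t := t) n_gt0 ltac:(lra))).
rewrite -INRE -RmultE => card_le.
apply: (Rmult_le_reg_r (exp (- E))); first exact: exp_pos.
by rewrite -exp_plus Rplus_opp_r exp_0.
Qed.

Lemma multinom_le_of_entropy_le (gT : finGroupType) (G : {group gT}) (chi : chiseq G) H :
  entropy chi <= H -> INR (multinom chi) <= exp (H * INR #|G|).
Proof.
rewrite /entropy => entropy_le.
have n_gt0 : 0 < INR #|G| by apply: lt_0_INR; apply/ltP; exact: cardG_gt0.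
have : (0 < word_multinomial chi * \prod_i (letter_count chi i)`!)%N.
  by rewrite word_multinomialK fact_gt0.
rewrite muln_gt0 => /andP [/ltP/lt_0_INR multinom_gt0 _].
rewrite -[INR (multinom chi)]exp_ln //; apply: exp_le_exp.
have := Rmult_le_compat_r _ _ _ (Rlt_le _ _ n_gt0) entropy_le.
by have -> : / INR #|G| * ln (INR (multinom chi)) * INR #|G| = ln (INR (multinom chi))
  by field; lra.
Qed.

Theorem lemma5p2 :
  exists (C : R) (N0 : nat),
    forall (gT : finGroupType) (G : {group gT}),
      abelian G -> (N0 <= #|G|)%N ->
      forall H : R,
        Rle (Rinv (pow (ln (INR #|G|)) 100)) H ->
        Rle (INR (count_entropy_le G H))
            (exp (Rplus (Rmult H (INR #|G|))
                  (Rmult C (Rdiv (Rmult (Rmult H (INR #|G|)) (ln (ln (INR #|G|))))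
                                 (ln (INR #|G|)))))).
Proof.
have [N0 N0_gt] := INR_unbounded (exp 163216).
exists 1217, N0 => gT G abelianG N0_le H H_ge.
have n_gt0 := cardG_gt0 G.
have L_ge : 163216 <= ln (INR #|G|).
  rewrite -[163216]ln_exp; apply: ln_le_ln; first exact: exp_pos.
  by apply: Rlt_le; apply: (Rlt_le_trans _ _ _ N0_gt); apply: le_INR; apply/leP.
have X_ge : INR #|G| / ln (INR #|G|) ^ 100 <= H * INR #|G|.
  by rewrite /Rdiv Rmult_comm; apply: Rmult_le_compat_r => //; exact: pos_INR.
apply: (Rle_trans _ _ _ _
  (card_words_multinomial_le (card_Iirr_abelian abelianG) n_gt0 L_ge X_ge)).
apply: le_INR; apply/leP; apply: subset_leq_card; apply/subsetP => chi.
rewrite !inE; case: Rle_dec => // /multinom_le_of_entropy_le multinom_le _.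
by case: Rle_dec.
Qed.
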